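(* Let $\Delta$ be a region of $\mathcal{C}_{n,A}$ ($n\ge1$) and let $D_1(\Delta)$ be the Dyck path defined below. Then $\mathrm{level}(\Delta)=\ell(D_1(\Delta))$. Equivalently, for any $\bm x\in\Delta$ with $x_{\pi(1)}>\dots>x_{\pi(n)}$, $\mathrm{level}(\Delta)=1+\#\{k\in[n-1]: x_{\pi(k)}-x_{\pi(k+1)}>a_1\}$.
   Context: Let $A=\{a_1,\dots,a_m\}$ with $a_1>\dots>a_m>0$; $\mathcal{C}_{n,A}$ is the arrangement in $\mathbb{R}^n$ of hyperplanes $x_i-x_j=0$ ($i<j$) and $x_i-x_j=a_k$ ($i\ne j$, $1\le k\le m$); regions are connected components of the complement. The level of $X\subseteq\mathbb{R}^n$ is the smallest integer $\ell\ge0$ such that there are a linear subspace $W$ of dimension $\ell$ and $r>0$ with $X\subseteq\{\bm x:\min_{\bm y\in W}\|\bm x-\bm y\|\le r\}$. For a region $\Delta$, pick $\bm x\in\Delta$ and $\pi\in\mathfrak{S}_n$ with $x_{\pi(1)}>\dots>x_{\pi(n)}$, and let $\alpha_i=\#\{j\in[n]:x_{\pi(i)}-x_{\pi(j)}>a_1\}$ (number of $+$ entries in row $i$ of the sign matrix $(\operatorname{sgn}(x_{\pi(i)}-x_{\pi(j)}-a_1))_{i,j}$); then $\alpha_1\ge\dots\ge\alpha_n=0$ and $\alpha_i\le n-i$, and these numbers do not depend on the choice of $\bm x\in\Delta$. $D_1(\Delta)$ is the lattice path from $(0,n)$ to $(n,0)$ with steps $E=(1,0)$, $S=(0,-1)$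 given by $E^{n-\alpha_1}SE^{\alpha_1-\alpha_2}S\cdots E^{\alpha_{n-1}-\alpha_n}S$; it is a Dyck path (stays weakly above the line $y=n-x$). For a Dyck path $D$ from $(0,n)$ to $(n,0)$, $\ell(D)$ is its number of prime components, i.e. the number of $k\in\{1,\dots,n\}$ such that $D$ passes through the point $(k,n-k)$. *)

From HB Require Import structures.
From mathcomp Require Import all_boot all_order all_algebra all_fingroup.
From mathcomp Require Import all_classical all_reals all_analysis.
Unset Printing Implicit Defensive.
Import Order.TTheory GRing.Theory Num.Theory.
Import numFieldNormedType.Exports.
Local Open Scope classical_set_scope.
Local Open Scope ring_scope.

(* The set A = {a_1 > ... > a_m > 0} is given as a seq A = [:: a_1; ...; a_m];
   a_1 is its head. *)
Definition a1 {R : realType} (A : seq R) : R := head 0 A.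

Definition arr_compl {R : realType} (n : nat) (A : seq R) : set 'rV[R]_n :=
  [set x | forall i j : 'I_n,
      ((i < j)%N -> x ord0 i - x ord0 j != 0) /\
      (i != j -> forall a, a \in A -> x ord0 i - x ord0 j != a)].

Definition is_region {R : realType} (n : nat) (A : seq R) (D : set 'rV[R]_n) :=
  exists2 x, arr_compl n A x & D = connected_component (arr_compl n A) x.

(* X lies within (Euclidean) distance r of some linear subspace of dimension l,
   i.e. X is contained in a tube {x : min_{y in W} ||x - y|| <= r}, r > 0.
   (The minimum over the closed subspace W is attained, so it is <= r iff
   some y in W has ||x - y|| <= r; we compare squared norms.) *)
Definition within_tube {R : realType} (n : nat) (X : set 'rV[R]_n) (l : nat) :=
  exists W : {vspace 'rV[R]_n}, \dim W = l /\
    exists2 r : R, 0 < r &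
      forall x, X x -> exists2 y, y \in W &
        \sum_(i < n) (x ord0 i - y ord0 i) ^+ 2 <= r ^+ 2.

Definition level {R : realType} (n : nat) (X : set 'rV[R]_n) (l : nat) :=
  within_tube n X l /\ forall l', within_tube n X l' -> (l <= l')%N.

(* alpha_i (for 0-indexed i, i.e. alpha_{i+1} of the paper) for a point x
   and a permutation pi with x_{pi(1)} > ... > x_{pi(n)}. *)
Definition alpha {R : realType} (n : nat) (A : seq R) (x : 'rV[R]_n)
    (pi : 'S_n) (i : 'I_n) : nat :=
  #|[pred j : 'I_n | a1 A < x ord0 (pi i) - x ord0 (pi j)]|.

(* Lattice paths are seq bool: true = E = (1,0), false = S = (0,-1). *)
(* D_1 = E^{n-alpha_1} S E^{alpha_1-alpha_2} S ... E^{alpha_{n-1}-alpha_n} S. *)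
Definition D1 {R : realType} (n : nat) (A : seq R) (x : 'rV[R]_n) (pi : 'S_n)
    : seq bool :=
  flatten [seq nseq d true ++ [:: false]
          | d <- pairmap subn n [seq alpha n A x pi i | i <- enum 'I_n]].

(* The path from (0,n) after the prefix take i D is at
   (#E in prefix, n - #S in prefix); it passes through (k, n-k) iff some
   prefix has exactly k E-steps and k S-steps. *)
Definition passes_through (D : seq bool) (k : nat) : bool :=
  [exists i : 'I_(size D).+1,
     (count id (take i D) == k) && (count negb (take i D) == k)].

Definition ell (n : nat) (D : seq bool) : nat :=
  #|[pred k : 'I_n.+1 | (0 < k)%N && passes_through D k]|.

(* Sort the coordinates of x decreasingly along pi and call rank k a gap when
   x_(pi k) - x_(pi (k+1)) > a_1.  Since alpha_k = n - k exactly at the gaps, D_1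
   returns to the diagonal after each gap and at its end, so ell(D_1) = 1 + #gaps.
   For s = 0 and every rank s following a gap, let w_s be the indicator of the
   coordinates of rank >= s.  A region never crosses a hyperplane x_i - x_j = a_1,
   so on it consecutive coordinates inside a block of non-gap ranks differ by at
   most a_1: the region lies in a tube around span(w_s).  Conversely, lowering the
   coordinates of rank >= s keeps x in the region, which thus contains rays in the
   independent directions -w_s; a vector of span(w_s) orthogonal to a subspace of
   smaller dimension would have unbounded inner product along one of these rays,
   so no thinner tube contains the region. *)

From HB Require Import structures.
From mathcomp Require Import all_boot all_order all_algebra all_fingroup.
From mathcomp Require Import all_classical all_reals all_analysis.
From mathcomp Require Import ring lra zify.
Import Order.TTheory GRing.Theory Num.Theory.
Import numFieldNormedType.Exports.
Local Open Scope classical_set_scope.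
Local Open Scope ring_scope.
Set Implicit Arguments.
Unset Strict Implicit.

Lemma connected_continuous_pos (T : topologicalType) (R : realType) (D : set T)
    (f : T -> R) (x y : T) :
  connected D -> continuous f -> (forall z, D z -> f z != 0) ->
  D x -> D y -> 0 < f x -> 0 < f y.
Proof.
move=> cD cf nz Dx Dy fx0; rewrite lt_neqAle eq_sym nz //= leNgt; apply/negP => fy0.
have /connected_intervalP/(_ (f y) (f x)) fD : connected (f @` D).
  by apply: connected_continuous_connected => //; exact: continuous_subspaceT.
have [z Dz fz0] : (f @` D) 0 by apply: fD; [exists y | exists x | rewrite !ltW].
by move: (nz z Dz); rewrite fz0 eqxx.
Qed.

Section Regions.
Variables (R : realType) (N : nat) (A : seq R).

Lemma region_connected (D : set 'rV[R]_N) : is_region N A D -> connected D.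
Proof. by case=> x0 _ ->; exact: component_connected. Qed.

Lemma region_sub_compl (D : set 'rV[R]_N) : is_region N A D -> D `<=` arr_compl N A.
Proof. by case=> x0 _ ->; exact: connected_component_sub. Qed.

Lemma region_diff_lt (D : set 'rV[R]_N) (x y : 'rV[R]_N) (i j : 'I_N) (a : R) :
  is_region N A D -> D x -> D y -> a \in A -> i != j ->
  x ord0 i - x ord0 j < a -> y ord0 i - y ord0 j < a.
Proof.
move=> DR Dx Dy aA ij xa.
pose f (z : 'rV[R]_N) := a - (z ord0 i - z ord0 j).
have cf : continuous f.
  move=> z; apply: (@continuousB _ _ _ (fun=> a) (fun z : 'rV[R]_N => z ord0 i - z ord0 j)).
    exact: cst_continuous.
  by apply: (@continuousB _ _ _ (fun z : 'rV[R]_N => z ord0 i)); exact: coord_continuous.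
have nz z : D z -> f z != 0.
  move=> /(region_sub_compl DR)/(_ i j) [_ /(_ ij a aA)].
  by rewrite /f subr_eq0 eq_sym.
have := connected_continuous_pos (region_connected DR) cf nz Dx Dy.
by rewrite /f !subr_gt0; apply.
Qed.

Lemma region_ray (D : set 'rV[R]_N) (x w : 'rV[R]_N) :
  is_region N A D -> D x -> (forall t, 0 <= t -> arr_compl N A (x - t *: w)) ->
  forall t, 0 <= t -> D (x - t *: w).
Proof.
move=> [x0 _ ->] Dx hC t t0; rewrite (same_connected_component Dx).
have cg : continuous (fun s : R => x - s *: w).
  move=> s; apply: (@continuousB _ _ _ (fun=> x) (fun s : R => s *: w)).
    exact: cst_continuous.
  by apply: continuousZr_tmp; exact: id.
pose B := (fun s : R => x - s *: w) @` `[0, t].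
have Bx : B x by exists 0; [rewrite /= in_itv /= lexx t0 | rewrite scale0r subr0].
have BC : B `<=` arr_compl N A.
  by move=> z [s]; rewrite /= in_itv /= => /andP[s0 _] <-; exact: hC.
have cB : connected B.
  apply: connected_continuous_connected; first exact: segment_connected.
  exact: continuous_subspaceT.
apply: (connected_component_max Bx BC cB).
by exists t => //; rewrite /= in_itv /= lexx t0.
Qed.

End Regions.

Section LatticePaths.
Local Open Scope nat_scope.

Definition block_path (ds : seq nat) : seq bool :=
  flatten [seq nseq d true ++ [:: false] | d <- ds].

Definition reaches (P : seq bool) (e k : nat) : Prop :=
  exists i, [/\ i <= size P, count id (take i P) = e & count negb (take i P) = k].

Lemma passes_throughP P k : reaches P k k <-> passes_through P k.
Proof.
split=> [[i [iP ek sk]] | /existsP[i /andP[/eqP ek /eqP sk]]].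
  by apply/existsP; exists (Ordinal (iP : i < (size P).+1)); rewrite /= ek sk !eqxx.
by exists i; split; rewrite // -ltnS.
Qed.

Lemma block_path_cons d ds :
  block_path (d :: ds) = nseq d true ++ false :: block_path ds.
Proof. by rewrite /block_path /= -catA. Qed.

Lemma take_block d P i : take i (nseq d true ++ false :: P) =
  if i <= d then nseq i true else nseq d true ++ false :: take (i - d.+1) P.
Proof.
elim: d i => [|d IH] [|i] //=; first by rewrite subSS subn0.
by rewrite IH ltnS subSS; case: ifP.
Qed.

Lemma reaches_nil e k : reaches [::] e k <-> e = 0 /\ k = 0.
Proof. by split=> [[[|i] [_ <- <-]] | [-> ->]] //; exists 0. Qed.

Lemma reaches_block d P e k : reaches (nseq d true ++ false :: P) e k <->
  if k is k'.+1 then d <= e /\ reaches P (e - d) k' else e <= d.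
Proof.
rewrite /reaches size_cat size_nseq /=; split.
- move=> [i [iP]]; rewrite take_block; case: ifP => id.
    by rewrite !count_nseq /= mul1n mul0n => <- <-.
  rewrite !count_cat !count_nseq /= mul1n mul0n add0n => <- <-.
  by split; [exact: leq_addr | exists (i - d.+1); rewrite addKn; split=> //; lia].
- case: k => [ed | k [de [j [jP je jk]]]].
    by exists e; rewrite take_block ed !count_nseq /= mul1n mul0n; split=> //; lia.
  exists (d + j.+1); rewrite take_block ifF; last by lia.
  rewrite (_ : d + j.+1 - d.+1 = j); last by lia.
  by rewrite !count_cat !count_nseq /= mul1n mul0n add0n je jk; split=> //; lia.
Qed.

Lemma path_geq_nth m s : path geq m s -> forall i, nth 0 s i <= m.
Proof.
have geq_trans : transitive geq by move=> a b c /= ba cb; exact: leq_trans cb ba.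
move=> /(order_path_min geq_trans)/(all_nthP 0) sm i.
by case: (ltnP i (size s)) => [/sm // | si]; rewrite nth_default.
Qed.

Lemma reaches_pairmap s m e k : path geq m s -> last m s = 0 ->
  reaches (block_path (pairmap subn m s)) e k.+1 <->
  [/\ k < size s, nth 0 s k.+1 + e <= m & m <= nth 0 s k + e].
Proof.
elim: s m k e => [|a s IH] m k e; first by move=> _ /= ->; rewrite reaches_nil; split=> -[].
move=> /= /andP[am ps] la; rewrite block_path_cons reaches_block.
have sa := path_geq_nth ps.
case: k => [|k].
  case: s {IH} ps la sa => [|b s] ps la sa.
    rewrite /= in la; rewrite reaches_nil /= la.
    by split=> [[? [? ?]] | [_ ? ?]]; do ?split; lia.
  rewrite block_path_cons reaches_block; have := sa 0 => /= ba.
  by split=> [[? ?] | [_ ? ?]]; do ?split; lia.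
rewrite IH //; have := sa k => /= ka.
by split=> [[? [? ? ?]] | [? ? ?]]; do ?split; lia.
Qed.

End LatticePaths.

Lemma card_ord_count m (P : pred nat) : #|[pred k : 'I_m | P k]| = count P (iota 0 m).
Proof. by rewrite -val_enum_ord count_map cardE /enum_mem size_filter filter_predT. Qed.

Lemma card_ord_gt m k : #|[pred j : 'I_m | (k < j)%N]| = (m - k.+1)%N.
Proof.
rewrite card_ord_count; elim: m => [|m IH] //.
by rewrite -[m.+1]addn1 iotaD count_cat IH /=; case: ltnP; lia.
Qed.

Lemma count_iota_succ m (P : pred nat) :
  count P (iota 0 m.+1) = (P 0 + count (fun k => P k.+1) (iota 0 m))%N.
Proof. by rewrite /= -[1%N]/(1 + 0)%N iotaDl count_map. Qed.

(* For k > n, [inord k] is rank 0; only k <= n is ever used. *)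
Definition rcoord {R : realType} {n : nat} (v : 'rV[R]_n.+1) (pi : 'S_n.+1) (k : nat) : R :=
  v ord0 (pi (inord k)).

Lemma rcoord_ord (R : realType) n (v : 'rV[R]_n.+1) pi (i : 'I_n.+1) :
  rcoord v pi i = v ord0 (pi i).
Proof. by rewrite /rcoord inord_val. Qed.

Section RankedCoordinates.
Variables (R : realType) (n : nat) (A : seq R) (x : 'rV[R]_n.+1) (pi : 'S_n.+1).
Hypothesis x_sorted : forall i j : 'I_n.+1, (i < j)%N -> x ord0 (pi j) < x ord0 (pi i).

Local Notation xr := (rcoord x pi).

Definition ralpha (k : nat) : nat := alpha n.+1 A x pi (inord k).

Definition rgap (k : nat) : bool := a1 A < xr k - xr k.+1.

Lemma rcoord_le j k : (j <= k <= n)%N -> xr k <= xr j.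
Proof.
case/andP; rewrite leq_eqVlt => /orP[/eqP -> // | jk] kn.
by apply/ltW/x_sorted; rewrite !inordK //; lia.
Qed.

Lemma ralphaE k : ralpha k = #|[pred j : 'I_n.+1 | a1 A < xr k - xr j]|.
Proof. by apply: eq_card => j; rewrite !inE rcoord_ord. Qed.

Lemma ralpha_mono j k : (j <= k <= n)%N -> (ralpha k <= ralpha j)%N.
Proof.
move=> jkn; rewrite !ralphaE; apply/subset_leq_card/fintype.subsetP => i; rewrite !inE.
by have := rcoord_le jkn; lra.
Qed.

Hypothesis a1_gt0 : 0 < a1 A.

Lemma ralpha_bound k : (k <= n)%N -> (ralpha k + k.+1 <= n.+1)%N.
Proof.
move=> kn; have : (ralpha k <= #|[pred j : 'I_n.+1 | (k < j)%N]|)%N.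
  rewrite ralphaE; apply/subset_leq_card/fintype.subsetP => j; rewrite !inE ltnNge.
  apply: contraTN => jk; rewrite -leNgt (le_trans _ (ltW a1_gt0)) // subr_le0.
  by apply: rcoord_le; rewrite jk kn.
by rewrite card_ord_gt; lia.
Qed.

Lemma ralpha_full k : (k < n)%N -> (ralpha k + k.+1 == n.+1)%N = rgap k.
Proof.
move=> kn; rewrite eqn_leq (ralpha_bound (ltnW kn)) /=; apply/idP/idP; last first.
  move=> gap; have : (#|[pred j : 'I_n.+1 | (k < j)%N]| <= ralpha k)%N.
    rewrite ralphaE; apply/subset_leq_card/fintype.subsetP => j; rewrite !inE => kj.
    have : xr j <= xr k.+1 by apply: rcoord_le; rewrite kj -ltnS ltn_ord.
    by move: gap; rewrite /rgap; lra.
  by rewrite card_ord_gt; lia.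
apply: contraTT => nogap; have : (ralpha k <= #|[pred j : 'I_n.+1 | (k.+1 < j)%N]|)%N.
  rewrite ralphaE; apply/subset_leq_card/fintype.subsetP => j; rewrite !inE ltnNge.
  apply: contraTN; rewrite leq_eqVlt ltnS => /orP[/eqP -> // | jk].
  rewrite -leNgt (le_trans _ (ltW a1_gt0)) // subr_le0.
  by apply: rcoord_le; rewrite jk (ltnW kn).
by rewrite card_ord_gt; lia.
Qed.

Let alphas := [seq alpha n.+1 A x pi i | i <- enum 'I_n.+1].

Lemma nth_alphas k : (k <= n)%N -> nth 0%N alphas k = ralpha k.
Proof.
move=> kn; rewrite (nth_map ord0) ?size_enum_ord //; congr alpha.
by apply: val_inj; rewrite /= nth_enum_ord ?inordK.
Qed.

Lemma passes_D1 k : (k <= n)%N ->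
  passes_through (D1 n.+1 A x pi) k.+1 = (k == n) || rgap k.
Proof.
move=> kn; have size_a : size alphas = n.+1 by rewrite size_map size_enum_ord.
have ps : path geq n.+1 alphas.
  apply/(pathP 0%N) => -[|i]; rewrite size_a => ilt /=; rewrite nth_alphas //.
    by have := ralpha_bound (leq0n n); lia.
  by rewrite nth_alphas ?ralpha_mono //; lia.
have ls : last n.+1 alphas = 0%N.
  rewrite -nth_last (set_nth_default 0%N) size_a //= nth_alphas //.
  by have := ralpha_bound (leqnn n); lia.
have reachesE := @reaches_pairmap alphas n.+1 k.+1 k ps ls.
rewrite [D1 _ _ _ _]/(block_path (pairmap subn n.+1 alphas)).
case: (ltngtP k n) kn reachesE => // [kn _ | -> _] reachesE; last first.
  apply/passes_throughP/reachesE.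
  by rewrite nth_default ?size_a // nth_alphas //; split; lia.
rewrite -(ralpha_full kn) eqn_leq (ralpha_bound (ltnW kn)) /=.
have kn' := ltnW kn; have := ralpha_bound kn => bnd.
apply/idP/idP => [/passes_throughP/reachesE[_ _] | full]; first by rewrite nth_alphas.
by apply/passes_throughP/reachesE; rewrite !nth_alphas //; split; lia.
Qed.

Lemma ell_D1 : ell n.+1 (D1 n.+1 A x pi) = (count rgap (iota 0 n)).+1.
Proof.
rewrite /ell (card_ord_count _ (fun k => (0 < k)%N && passes_through (D1 n.+1 A x pi) k)).
rewrite count_iota_succ ltnn add0n.
rewrite (eq_in_count (a2 := fun k => (k == n) || rgap k)); last first.
  by move=> k; rewrite mem_iota add0n ltnS => kn; rewrite passes_D1.
rewrite -[n.+1]addn1 iotaD count_cat /= add0n eqxx addn0 addn1; congr S.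
by apply: eq_in_count => k; rewrite mem_iota add0n => /ltn_eqF ->.
Qed.

Lemma card_gaps : #|[pred k : 'I_n.+1 | [exists k' : 'I_n.+1,
    (k'.+1 == k :> nat) && (a1 A < x ord0 (pi k') - x ord0 (pi k))]]| =
  count rgap (iota 0 n).
Proof.
rewrite (eq_card (B := [pred k : 'I_n.+1 | (0 < k)%N && rgap k.-1])).
  by rewrite (card_ord_count _ (fun k => (0 < k)%N && rgap k.-1)) count_iota_succ.
move=> k; rewrite !inE /rgap; apply/existsP/andP => [[k' /andP[/eqP kk' gap]] | [k0 gap]].
  by rewrite -kk' /=; split=> //; rewrite kk' !rcoord_ord.
have kn : (k.-1 < n.+1)%N := leq_ltn_trans (leq_pred k) (ltn_ord k).
exists (Ordinal kn); rewrite /= prednK // eqxx /=.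
by move: gap; rewrite prednK // -!rcoord_ord.
Qed.

End RankedCoordinates.

Lemma ray_bounded_slope (R : realFieldType) (a b K : R) :
  (forall t, 0 <= t -> `|a - t * b| <= K) -> b = 0.
Proof.
move=> bnd; apply/eqP; apply: contraT => b0.
have K0 : 0 <= K by apply: le_trans (bnd 0 (lexx 0)).
pose t := (`|a| + K + 1) / `|b|.
have t0 : 0 <= t by rewrite divr_ge0 // addr_ge0 // addr_ge0.
have tb : `|t * b| = `|a| + K + 1.
  by rewrite normrM ger0_norm // /t divfK // normr_eq0.
have := ler_normB a (a - t * b); rewrite (_ : a - (a - t * b) = t * b); last by ring.
by rewrite tb; have := bnd t t0; lra.
Qed.

Section Tubes.
Variables (R : realType) (N : nat).
Implicit Types (u v w x y z : 'rV[R]_N) (X : set 'rV[R]_N).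

Definition dotv u v : R := \sum_(i < N) u ord0 i * v ord0 i.

Lemma dotvC u v : dotv u v = dotv v u.
Proof. by apply: eq_bigr => i _; rewrite mulrC. Qed.

Lemma dotvBr u v w : dotv u (v - w) = dotv u v - dotv u w.
Proof. by rewrite /dotv -sumrB; apply: eq_bigr => i _; rewrite !mxE mulrBr. Qed.

Lemma dotvZr u a v : dotv u (a *: v) = a * dotv u v.
Proof. by rewrite /dotv mulr_sumr; apply: eq_bigr => i _; rewrite !mxE mulrCA. Qed.

Lemma dotv_sumr (I : finType) (P : pred I) (c : I -> R) (v : I -> 'rV[R]_N) u :
  dotv u (\sum_(k | P k) c k *: v k) = \sum_(k | P k) c k * dotv u (v k).
Proof.
rewrite /dotv; under eq_bigr => i _ do rewrite summxE mulr_sumr.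
rewrite exchange_big; apply: eq_bigr => k _; rewrite mulr_sumr.
by apply: eq_bigr => i _; rewrite mxE mulrCA.
Qed.

Lemma dotvv_eq0 u : dotv u u = 0 -> u = 0.
Proof.
move=> /eqP; rewrite psumr_eq0 => [/allP uu0 | i _]; last by rewrite -expr2 sqr_ge0.
apply/rowP => i; rewrite mxE; apply/eqP.
by have := uu0 i (mem_index_enum i); rewrite mulf_eq0 orbb.
Qed.

Lemma abs_coord_le v r : 0 <= r -> \sum_(i < N) v ord0 i ^+ 2 <= r ^+ 2 ->
  forall i, `|v ord0 i| <= r.
Proof.
move=> r0 vr i; rewrite -(ger0_norm r0) -ler_sqr ?nnegrE // !real_normK ?num_real //.
by apply: le_trans vr; rewrite (bigD1 i) //= lerDl sumr_ge0 // => j _; exact: sqr_ge0.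
Qed.

Lemma abs_dotv_le u v r : 0 <= r -> \sum_(i < N) v ord0 i ^+ 2 <= r ^+ 2 ->
  `|dotv u v| <= (\sum_(i < N) `|u ord0 i|) * r.
Proof.
move=> r0 vr; rewrite mulr_suml; apply: le_trans (ler_norm_sum _ _ _) _.
by apply: ler_sum => i _; rewrite normrM ler_wpM2l // abs_coord_le.
Qed.

Lemma orthogonal_ray_in_tube X (W : {vspace 'rV[R]_N}) r x w u : 0 <= r ->
  (forall y, X y -> exists2 z, z \in W &
     \sum_(i < N) (y ord0 i - z ord0 i) ^+ 2 <= r ^+ 2) ->
  (forall t, 0 <= t -> X (x - t *: w)) -> (forall z, z \in W -> dotv u z = 0) ->
  dotv u w = 0.
Proof.
move=> r0 tube ray uW.
apply: (@ray_bounded_slope _ (dotv u x) _ ((\sum_i `|u ord0 i|) * r)).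
move=> t t0; have [z zW xz] := tube _ (ray t t0).
have := @abs_dotv_le u (x - t *: w - z) r r0.
rewrite !dotvBr dotvZr (uW z zW) subr0; apply.
by apply: le_trans xz; rewrite le_eqVlt; apply/orP; left; apply/eqP/eq_bigr => i _; rewrite !mxE.
Qed.

Lemma exists_comb_orthogonal (ws : seq 'rV[R]_N) (W : {vspace 'rV[R]_N}) :
  (\dim W < size ws)%N ->
  exists2 t : 'rV[R]_(size ws), t != 0 &
    forall z, z \in W -> dotv (\sum_(k < size ws) t ord0 k *: ws`_k) z = 0.
Proof.
move=> Wws; pose b := vbasis W.
pose M : 'M[R]_(size ws, \dim W) := \matrix_(k, j) dotv ws`_k b`_j.
have kerM : kermx M != 0.
  by rewrite -mxrank_eq0 mxrank_ker; have := rank_leq_col M; lia.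
have [k0 tk0] : exists k0, row k0 (kermx M) != 0.
  apply/existsP; apply: contraR kerM => /existsPn rows0; apply/eqP/row_matrixP => k.
  by rewrite row0; apply/eqP; have := rows0 k; rewrite negbK.
exists (row k0 (kermx M)) => // z /coord_vbasis ->.
rewrite dotv_sumr big1 // => j _; apply/eqP; rewrite mulf_eq0; apply/orP; right.
have /rowP/(_ j) : row k0 (kermx M) *m M = 0 by rewrite -row_mul mulmx_ker row0.
rewrite !mxE dotvC dotv_sumr => tM; apply/eqP; rewrite -[RHS]tM.
by apply: eq_bigr => k _; rewrite !mxE dotvC.
Qed.

Lemma within_tube_free_rays X x (ws : seq 'rV[R]_N) l : free ws ->
  (forall w, w \in ws -> forall t, 0 <= t -> X (x - t *: w)) ->
  within_tube N X l -> (size ws <= l)%N.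
Proof.
move=> ws_free rays [W [<- [r r0 tube]]].
rewrite leqNgt; apply/negP => /exists_comb_orthogonal.
case=> t t0 tW; move: t0; apply/negP/negPn/eqP.
set u := \sum_k _ *: _ in tW.
have uws (k : 'I_(size ws)) : dotv u ws`_k = 0.
  exact: (orthogonal_ray_in_tube (ltW r0) tube (rays _ (mem_nth 0 (ltn_ord k))) tW).
have /dotvv_eq0 u0 : dotv u u = 0.
  by rewrite {2}/u dotv_sumr big1 // => k _; rewrite uws mulr0.
apply/rowP => k; rewrite mxE.
exact: (elimT (@freeP _ _ _ (in_tuple ws)) ws_free (fun k => t ord0 k) u0 k).
Qed.

Lemma within_tube_coordwise X (W : {vspace 'rV[R]_N}) B : 0 <= B ->
  (forall y, X y -> exists2 z, z \in W & forall i, `|y ord0 i - z ord0 i| <= B) ->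
  within_tube N X (\dim W).
Proof.
move=> B0 near; exists W; split=> //.
have NB0 : 0 <= N%:R * B by rewrite mulr_ge0.
exists (N%:R * B + 1); first by rewrite ltr_wpDl.
move=> y /near[z zW yz]; exists z => //.
apply: le_trans (_ : \sum_(i < N) B ^+ 2 <= _).
  by apply: ler_sum => i _; rewrite -real_normK ?num_real // ler_sqr ?nnegrE.
have NN : N%:R <= N%:R ^+ 2 :> R by rewrite -natrX ler_nat; nia.
have : 0 <= (N%:R ^+ 2 - N%:R) * B ^+ 2 by rewrite mulr_ge0 ?sqr_ge0 ?subr_ge0.
by rewrite sumr_const card_ord -mulr_natl; nra.
Qed.

End Tubes.

Definition rank_ge_vec {R : realType} {N : nat} (pi : 'S_N) (s : 'I_N) : 'rV[R]_N :=
  \row_i (s <= (pi^-1)%g i)%N%:R.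

Lemma rank_ge_vec_perm (R : realType) N (pi : 'S_N) (s p : 'I_N) :
  rank_ge_vec pi s ord0 (pi p) = (s <= p)%N%:R :> R.
Proof. by rewrite mxE permK. Qed.

Lemma free_rank_ge_vecs (R : realType) N (pi : 'S_N) (L : seq 'I_N) :
  sorted (fun a b : 'I_N => (a < b)%N) L -> free (map (@rank_ge_vec R N pi) L).
Proof.
elim: L => [|s L IH] /=; first by rewrite /free span_nil dimv0.
move=> sL; rewrite free_cons IH ?(path_sorted sL) // andbT.
have ltn_ord_trans : transitive (fun a b : 'I_N => (a < b)%N) by move=> ? ? ?; exact: ltn_trans.
have sltL := allP (order_path_min ltn_ord_trans sL).
apply/negP => /(@coord_span _ _ _ (in_tuple _))/(congr1 (fun v : 'rV[R]_N => v ord0 (pi s))).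
rewrite rank_ge_vec_perm leqnn summxE big1 => [/eqP|i _]; first by rewrite oner_eq0.
rewrite mxE (nth_map s) -?(size_map (@rank_ge_vec R N pi)) // rank_ge_vec_perm.
by rewrite leqNgt sltL ?mem_nth -?(size_map (@rank_ge_vec R N pi)) // mulr0.
Qed.

Lemma arr_compl_lower_block (R : realType) N (A : seq R) (x : 'rV[R]_N) (pi : 'S_N)
    (s : 'I_N) t :
  0 < a1 A -> (forall a, a \in A -> 0 < a <= a1 A) -> arr_compl N A x ->
  (forall p q : 'I_N, (p < s <= q)%N -> a1 A < x ord0 (pi p) - x ord0 (pi q)) ->
  0 <= t -> arr_compl N A (x - t *: rank_ge_vec pi s).
Proof.
move=> a1_gt0 A_le xC sgap t0 i j; have [xij xija] := xC i j; rewrite !mxE.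
have same c : x ord0 i - c - (x ord0 j - c) = x ord0 i - x ord0 j by ring.
have := sgap (pi^-1 i)%g (pi^-1 j)%g; have := sgap (pi^-1 j)%g (pi^-1 i)%g.
rewrite !permKV; case: (leqP s (pi^-1 i)%g) => si; case: (leqP s (pi^-1 j)%g) => sj /=.
- by rewrite same.
- move=> /(_ isT) ji _.
  by rewrite mulr1 mulr0; split=> [_ | _ a /A_le/andP[a0 aa1]]; rewrite lt_eqF //; lra.
- move=> _ /(_ isT) ij.
  by rewrite mulr1 mulr0; split=> [_ | _ a /A_le/andP[a0 aa1]]; rewrite gt_eqF //; lra.
- by rewrite same.
Qed.

Definition rdiff {R : realType} {n : nat} (v : 'rV[R]_n.+1) (pi : 'S_n.+1) (k : nat) : R :=
  if k is k'.+1 then rcoord v pi k - rcoord v pi k' else rcoord v pi 0.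

Lemma rcoord_sum_rdiff (R : realType) n (v : 'rV[R]_n.+1) pi p :
  rcoord v pi p = \sum_(k < p.+1) rdiff v pi k.
Proof.
elim: p => [|p IH]; first by rewrite big_ord1.
by rewrite big_ord_recr /= -IH addrC subrK.
Qed.

Lemma rank_ge_decomp (R : realType) n (v : 'rV[R]_n.+1) pi :
  v = \sum_(s < n.+1) rdiff v pi s *: rank_ge_vec pi s.
Proof.
apply/rowP => i; rewrite -[i](permKV pi) summxE -rcoord_ord rcoord_sum_rdiff.
rewrite (big_ord_widen n.+1 (rdiff v pi) (ltn_ord _)) big_mkcond /=.
by apply: eq_bigr => s _; rewrite mxE rank_ge_vec_perm ltnS; case: leqP; rewrite ?mulr1 ?mulr0.
Qed.

Lemma abs_comb_coord_le (R : realType) N (I : finType) (P : pred I) (c : I -> R)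
    (w : I -> 'rV[R]_N) i :
  (forall k, `|w k ord0 i| <= 1) ->
  `|(\sum_(k | P k) c k *: w k) ord0 i| <= \sum_(k | P k) `|c k|.
Proof.
move=> w1; rewrite summxE; apply: le_trans (ler_norm_sum _ _ _) _.
by apply: ler_sum => k _; rewrite mxE normrM ler_piMr.
Qed.

Section Region.
Variables (R : realType) (n : nat) (A : seq R) (D : set 'rV[R]_n.+1).
Variables (x : 'rV[R]_n.+1) (pi : 'S_n.+1).
Hypotheses (D_region : is_region n.+1 A D) (Dx : D x).
Hypothesis x_sorted : forall i j : 'I_n.+1, (i < j)%N -> x ord0 (pi j) < x ord0 (pi i).
Hypotheses (a1_A : a1 A \in A) (A_le : forall a, a \in A -> 0 < a <= a1 A).

Let a1_gt0 : 0 < a1 A. Proof. by have /andP[] := A_le a1_A. Qed.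

Definition block_start : pred 'I_n.+1 := fun s => (s == 0 :> nat) || rgap A x pi s.-1.

Let ws : seq 'rV[R]_n.+1 := [seq rank_ge_vec pi s | s <- enum block_start].

Lemma size_block_starts : size ws = (count (rgap A x pi) (iota 0 n)).+1.
Proof.
rewrite size_map -cardE.
by rewrite (card_ord_count _ (fun s => (s == 0)%N || rgap A x pi s.-1)) count_iota_succ.
Qed.

Lemma free_block_starts : free ws.
Proof.
apply: free_rank_ge_vecs; rewrite -(@sorted_map _ _ val ltn) /enum_mem -enumT.
apply: (subseq_sorted ltn_trans (map_subseq val (filter_subseq _ _))).
by rewrite val_enum_ord iota_ltn_sorted.
Qed.

Lemma block_start_ray s : block_start s -> forall t, 0 <= t -> D (x - t *: rank_ge_vec pi s).
Proof.
move=> Ss; apply: (region_ray D_region Dx) => t t0.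
apply: arr_compl_lower_block => //; first exact: region_sub_compl Dx.
move=> p q /andP[ps sq]; move: Ss.
rewrite /block_start (gtn_eqF (leq_ltn_trans (leq0n p) ps)) /=.
rewrite /rgap -!rcoord_ord; have sn := ltn_ord s; have qn := ltn_ord q.
have ps' : (p <= s.-1 <= n)%N by lia.
have sq' : (s.-1.+1 <= q <= n)%N by lia.
by have := rcoord_le x_sorted ps'; have := rcoord_le x_sorted sq'; lra.
Qed.

Lemma region_rdiff_le y s : D y -> ~~ block_start s -> `|rdiff y pi s| <= a1 A.
Proof.
move=> Dy; rewrite /block_start negb_or => /andP[s0 nogap].
have [k sk kn] : exists2 k, s = k.+1 :> nat & (k < n)%N.
  by exists s.-1; [rewrite prednK // lt0n | have := ltn_ord s; lia].
move: nogap; rewrite /rdiff sk /rgap /rcoord /= -leNgt => xk.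
have kk : pi (inord k) != pi (inord k.+1) :> 'I_n.+1.
  by rewrite (inj_eq perm_inj); apply/eqP => /(congr1 val)/=; rewrite !inordK //; lia.
have [_ /(_ kk _ a1_A)] := region_sub_compl D_region Dx (pi (inord k)) (pi (inord k.+1)).
rewrite neq_lt => /orP[xk_lt | ]; last by rewrite ltNge xk.
have xk1 : x ord0 (pi (inord k.+1)) - x ord0 (pi (inord k)) < a1 A.
  have : x ord0 (pi (inord k.+1)) < x ord0 (pi (inord k)).
    by apply: x_sorted; rewrite !inordK //; lia.
  lra.
have := region_diff_lt D_region Dx Dy a1_A kk xk_lt.
have := region_diff_lt D_region Dx Dy a1_A (_ : _ != _) xk1; rewrite eq_sym => /(_ kk).
by rewrite ler_norml; lra.
Qed.

Lemma region_near_span y : D y ->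
  exists2 z, z \in <<ws>>%VS & forall i, `|y ord0 i - z ord0 i| <= n.+1%:R * a1 A.
Proof.
move=> Dy; pose z := \sum_(s | block_start s) rdiff y pi s *: rank_ge_vec pi s.
exists z => [|i].
  by apply: rpred_sum => s Ss; apply/rpredZ/memv_span; rewrite map_f // mem_enum.
have -> : y ord0 i - z ord0 i = (y - z) ord0 i by rewrite !mxE.
rewrite /z {1}(rank_ge_decomp y pi) (bigID block_start) /= addrC addrK.
apply: le_trans (abs_comb_coord_le _ _ _) _ => [s | ].
  by rewrite mxE normr_nat lern1 leq_b1.
apply: le_trans (_ : \sum_(s | ~~ block_start s) a1 A <= _).
  by apply: ler_sum => s; exact: region_rdiff_le Dy.
rewrite sumr_const -[a1 A *+ _]mulr_natl ler_pM2r // ler_nat.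
by apply: leq_trans (max_card _) _; rewrite card_ord.
Qed.

Lemma level_region : level n.+1 D (count (rgap A x pi) (iota 0 n)).+1.
Proof.
rewrite -size_block_starts; split=> [|l].
  rewrite -(eqP free_block_starts).
  by apply: within_tube_coordwise region_near_span; rewrite mulr_ge0 ?ltW.
apply: within_tube_free_rays free_block_starts _ => w /mapP[s].
by rewrite mem_enum => Ss ->; exact: block_start_ray.
Qed.

End Region.

Lemma mem_le_a1 (R : realType) (A : seq R) a :
  sorted (fun a b => b < a) A -> a \in A -> a <= a1 A.
Proof.
case: A => // a0 A sA; rewrite inE => /orP[/eqP -> // | aA].
have gt_trans : transitive (fun a b : R => b < a) by move=> u v w vu wv; exact: lt_trans wv vu.
exact/ltW/(allP (order_path_min gt_trans sA)).
Qed.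

Theorem theorem3p2 (R : realType) (n : nat) (A : seq R)
  (hn : (1 <= n)%N)
  (hA0 : A != [::]) (hAsort : sorted (fun a b => b < a) A)
  (hApos : all (fun a => 0 < a) A)
  (D : set 'rV[R]_n) (hD : is_region n A D)
  (x : 'rV[R]_n) (hx : D x) (pi : 'S_n)
  (hpi : forall i j : 'I_n, (i < j)%N -> x ord0 (pi j) < x ord0 (pi i)) :
  level n D (ell n (D1 n A x pi)) /\
  level n D (addn 1 #|[pred k : 'I_n | [exists k' : 'I_n,
                    (k'.+1 == k :> nat) &&
                    (a1 A < x ord0 (pi k') - x ord0 (pi k))]]|).
Proof.
case: n hn D hD x hx pi hpi => [//|n] _ D hD x hx pi hpi.
have A_le a : a \in A -> 0 < a <= a1 A by move=> aA; rewrite (allP hApos) ?mem_le_a1.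
have a1_A : a1 A \in A by case: A hA0 {hAsort hApos hD A_le} => //= a A _; exact: mem_head.
have a1_gt0 : 0 < a1 A by have /andP[] := A_le _ a1_A.
have lev := level_region hD hx hpi a1_A A_le.
by rewrite ell_D1 // card_gaps // add1n.
Qed.
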